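(* Let $p\ge 3$ be a prime and let $(a_n)_{n\ge0}$ be a sequence of elements of $\mathbf{Q}_p$ satisfying $a_n=ra_{n-1}+sa_{n-2}$ ($n\ge2$) for some $r,s\in\mathbf{Q}_p$, given by $a_n=c_1\lambda_1^n+c_2\lambda_2^n$ for nonzero $c_1,c_2,\lambda_1,\lambda_2$ which all lie in $\mathbf{Q}_p$ or all lie in some unramified quadratic extension $\mathbf{Q}_p(\sqrt d)$ of $\mathbf{Q}_p$. Suppose $|\lambda_1|_p=|\lambda_2|_p>0$ and $\lambda_2/\lambda_1$ is not a root of unity. Let $l$ be the order of $\lambda_2/\lambda_1$ modulo $p$ and $k=\nu_p\big((\lambda_2/\lambda_1)^l-1\big)$. Let $K$ be the Kepler set of $(a_n)$ and let $\Lambda$ be the closure of $\{(\lambda_2/\lambda_1)^n: n\in\mathbf{N}\}$. <ol> <li>If $-c_1/c_2\notin\Lambda$, then $$K=\bigsqcup_{i=0}^{l-1}\left(\frac{a_{i+1}}{a_i}+p^{\nu_p(c_1/c_2)+\nu_p(\lambda_2-\lambda_1)-2\nu_p\left(c_1/c_2+(\lambda_2/\lambda_1)^i\right)+k}\mathbf{Z}_p\right).$$</li> <li>If $-c_1/c_2\in\Lambda$ and $l=1$, then $K=\mathbf{Q}_p\setminus\left(\frac{\lambda_1+\lambda_2}{2}+p^{1+\nu_p(\lambda_2)}\mathbf{Z}_p\right)$.</li> <li>If $-c_1/c_2\in\Lambda$, $l\ge2$, and $s\in\{0,1,\dots,l-1\}$ is defined by $(\lambda_2/\lambda_1)^s\equiv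 -c_1/c_2 \pmod{p^k}$, then $$K=\bigsqcup_{i=0,\,i\ne s}^{l-1}\left(\frac{a_{i+1}}{a_i}+p^{\nu_p(\lambda_2-\lambda_1)+k}\mathbf{Z}_p\right)\ \bigsqcup\ \left(\mathbf{Q}_p\setminus p^{\nu_p(\lambda_2)+1-k}\mathbf{Z}_p\right).$$</li> </ol>
   Context: The Kepler set of a sequence $(a_n)_{n\ge0}$ in $\mathbf{Q}_p$ is the closure in $\mathbf{Q}_p$ of $\{a_{n+1}/a_n : n\ge0,\ a_n\ne0\}$. $\nu_p$ denotes the $p$-adic valuation on $\mathbf{Q}_p$ and its unique extension to $\mathbf{Q}_p(\sqrt d)$ with $\nu_p(p)=1$; $|x|_p=p^{-\nu_p(x)}$. The unramified quadratic extension is $\mathbf{Q}_p(\sqrt d)$ with $d\in\mathbf{Z}_p^*$ a non-square; its ring of integers is $\mathbf{Z}_p[\sqrt d]$. For $x,y$ in the ring of integers and $m\ge1$, $x\equiv y\pmod{p^m}$ means $x-y\in p^m$ times the ring of integers. For a unit $u$ of the ring of integers, the order of $u$ modulo $p$ is the least $l\ge1$ with $u^l\equiv1\pmod p$. The closure $\Lambda$ is taken in the field containing $\lambda_1,\lambda_2$; $\bigsqcup$ denotes disjoint union. *)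

(* Q_p and its unramified quadratic extension are given
   axiomatically (as binders with hypotheses) inside a field L equipped with
   a Z-valued valuation v. *)
From mathcomp Require Import all_boot all_order all_algebra.
Set Implicit Arguments. Unset Strict Implicit. Unset Printing Implicit Defensive.
Import Order.TTheory GRing.Theory Num.Theory.
Local Open Scope ring_scope.

Definition vclose (L : fieldType) (v : L -> int) (m : int) (x y : L) : Prop :=
  x = y \/ m <= v (x - y).

(* v is a (discrete, Z-valued) valuation with v(p) = 1; v 0 is irrelevant. *)
Definition is_p_valuation (L : fieldType) (p : nat) (v : L -> int) : Prop :=
  [/\ forall x y : L, x != 0 -> y != 0 -> v (x * y) = v x + v y,
      forall x y : L, x != 0 -> y != 0 -> x + y != 0 ->
        Num.min (v x) (v y) <= v (x + y)
    & v (p%:R) = 1].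

Definition is_subfield (L : fieldType) (Qp : {pred L}) : Prop :=
  [/\ 0 \in Qp /\ 1 \in Qp,
      forall x y, x \in Qp -> y \in Qp -> x + y \in Qp,
      forall x, x \in Qp -> - x \in Qp,
      forall x y, x \in Qp -> y \in Qp -> x * y \in Qp
    & forall x, x \in Qp -> x^-1 \in Qp].

(* Qp (with the restriction of v) is the field of p-adic numbers:
   characteristic 0 subfield, complete for v, with residue field F_p
   (every element of valuation >= 0 is congruent mod p to an integer).
   Together with v(p) = 1 this characterizes Q_p up to isometric isomorphism. *)
Definition is_Qp_in (L : fieldType) (p : nat) (v : L -> int) (Qp : {pred L}) : Prop :=
  [/\ is_p_valuation p v,
      is_subfield Qp,
      forall n : nat, (n.+1)%:R != 0 :> L,
      forall x, x \in Qp -> x != 0 -> 0 <= v x -> exists n : nat, vclose v 1 x n%:R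
    & forall u : nat -> L, (forall n, u n \in Qp) ->
        (forall m : int, exists N : nat, forall i j : nat, (N <= i)%N -> (N <= j)%N ->
           vclose v m (u i) (u j)) ->
        exists2 x, x \in Qp & forall m : int, exists N : nat, forall n : nat,
           (N <= n)%N -> vclose v m (u n) x].

Definition Qp_or_unramified_quadratic (L : fieldType) (v : L -> int) (Qp : {pred L}) : Prop :=
  (forall x : L, x \in Qp) \/
  exists d delta : L,
    [/\ d \in Qp /\ d != 0, v d = 0, (forall y, y \in Qp -> y ^+ 2 != d),
        delta ^+ 2 = d
      & forall x : L, exists a b, [/\ a \in Qp, b \in Qp & x = a + b * delta]].

Definition vclosure (L : fieldType) (v : L -> int) (A S : L -> Prop) : L -> Prop :=
  fun x => A x /\ forall m : int, exists y, S y /\ vclose v m y x.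

Definition kepler_set (L : fieldType) (v : L -> int) (Qp : {pred L}) (a : nat -> L)
  : L -> Prop :=
  vclosure v (fun x => x \in Qp) (fun y => exists n : nat, a n != 0 /\ y = a n.+1 / a n).

Definition order_modp (L : fieldType) (v : L -> int) (u : L) (l : nat) : Prop :=
  [/\ (1 <= l)%N, vclose v 1 (u ^+ l) 1
    & forall j : nat, (1 <= j)%N -> (j < l)%N -> ~ vclose v 1 (u ^+ j) 1].

Definition pball (L : fieldType) (v : L -> int) (Qp : {pred L}) (c : L) (e : int)
  : L -> Prop :=
  fun x => x \in Qp /\ vclose v e x c.

(* Write u = lam2 / lam1 and y = - c1 / c2. Then a_n = c2 lam1^n (u^n - y), so
   a_(n+1) / a_n = F (u^n) for a Moebius map F with pole y.  As u^l = 1 mod p^k, the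
   powers u^n fall into l classes n = i mod l, and by lifting the exponent the p^J points
   u^(i + l m), m < p^J, are pairwise incongruent mod p^(k+J).  On a class whose distance
   to y is constant, F scales distances by a constant, so the p^J images meet every
   subball of a ball and their closure is that whole ball.  If y is p^k-close to a class
   (equivalently y lies in the closure of the powers of u), F sends that class towards its
   pole: G = 1 / (F - (lam1 + lam2) / 2) then fills a ball around 0, and the class
   contributes the complement of a ball to the Kepler set. *)

From mathcomp Require Import all_boot all_order all_algebra.
From mathcomp Require Import zify ring.
Import Order.TTheory GRing.Theory Num.Theory.
Local Open Scope ring_scope.
Set Implicit Arguments. Unset Strict Implicit. Unset Printing Implicit Defensive.

Section Valuation.
Variables (L : fieldType) (p : nat) (v : L -> int).
Hypothesis valM : forall {x y : L}, x != 0 -> y != 0 -> v (x * y) = v x + v y.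
Hypothesis valD : forall {x y : L}, x != 0 -> y != 0 -> x + y != 0 ->
  Num.min (v x) (v y) <= v (x + y).
Hypothesis valp : v p%:R = 1.
Hypothesis char0 : forall n : nat, n.+1%:R != 0 :> L.
Hypothesis p_prime : prime p.

Definition pdvd (m : int) (x : L) : bool := (x == 0) || (m <= v x).

Lemma vcloseE m (x y : L) : vclose v m x y <-> pdvd m (x - y).
Proof.
rewrite /vclose /pdvd subr_eq0; split; first by case=> [->|->]; rewrite ?eqxx ?orbT.
by case/orP=> [/eqP|]; [left|right].
Qed.

Lemma pballE (Qp : {pred L}) c e x : pball v Qp c e x <-> x \in Qp /\ pdvd e (x - c).
Proof. by split=> -[xQ /vcloseE]. Qed.

Lemma val_pdvd m (x : L) : pdvd m x -> x != 0 -> m <= v x.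
Proof. by rewrite /pdvd; case: eqP. Qed.

Lemma pdvd_val m (x : L) : m <= v x -> pdvd m x.
Proof. by move=> h; rewrite /pdvd h orbT. Qed.

Lemma pdvd0 m : pdvd m 0.
Proof. by rewrite /pdvd eqxx. Qed.

Lemma pdvdW m m' (x : L) : m' <= m -> pdvd m x -> pdvd m' x.
Proof. by move=> hm /orP[h|h]; rewrite /pdvd ?h // (le_trans hm h) orbT. Qed.

Lemma val1 : v 1 = 0.
Proof.
have one0 : (1 : L) != 0 := oner_neq0 L.
by have := valM one0 one0; rewrite mulr1; lia.
Qed.

Lemma valN (x : L) : v (- x) = v x.
Proof.
have N1 : (-1 : L) != 0 by rewrite oppr_eq0 oner_neq0.
have vN1 : v (-1) = 0.
  by have := valM N1 N1; rewrite mulrNN mulr1 val1; lia.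
have [->|hx] := eqVneq x 0; first by rewrite oppr0.
by rewrite -mulN1r valM // vN1 add0r.
Qed.

Lemma valV (x : L) : x != 0 -> v x^-1 = - v x.
Proof. by move=> hx; have := valM hx (invr_neq0 hx); rewrite mulfV // val1; lia. Qed.

Lemma valX (x : L) n : x != 0 -> v (x ^+ n) = n%:Z * v x.
Proof.
move=> hx; elim: n => [|n IH]; first by rewrite expr0 val1 mul0r.
rewrite exprS valM ?expf_neq0 // IH; lia.
Qed.

Lemma val_div (x y : L) : x != 0 -> y != 0 -> v (x / y) = v x - v y.
Proof. by move=> hx hy; rewrite valM ?invr_eq0 // valV. Qed.

Lemma valD_dominant (x y : L) : x != 0 -> pdvd (v x + 1) y -> x + y != 0 /\ v (x + y) = v x.
Proof.
move=> hx; have [->|hy /val_pdvd /(_ hy) hlt] := eqVneq y 0; first by rewrite addr0.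
have hxy : x + y != 0.
  by apply: contraTneq hlt => /eqP; rewrite addr_eq0 => /eqP ->; rewrite valN; lia.
split=> //; have := valD hx hy hxy.
have ny0 : - y != 0 by rewrite oppr_eq0.
have := valD hxy ny0; rewrite addrK valN => /(_ hx); lia.
Qed.

Lemma pdvdD m (x y : L) : pdvd m x -> pdvd m y -> pdvd m (x + y).
Proof.
have [->|hx] := eqVneq x 0; first by rewrite add0r.
have [->|hy] := eqVneq y 0; first by rewrite addr0.
have [->|hxy] := eqVneq (x + y) 0; first by rewrite pdvd0.
move=> /val_pdvd /(_ hx) h1 /val_pdvd /(_ hy) h2; apply: pdvd_val.
have := valD hx hy hxy; lia.
Qed.

Lemma pdvdN m (x : L) : pdvd m (- x) = pdvd m x.
Proof. by rewrite /pdvd oppr_eq0 valN. Qed.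

Lemma pdvdB m (x y : L) : pdvd m x -> pdvd m y -> pdvd m (x - y).
Proof. by move=> hx hy; apply: pdvdD; rewrite ?pdvdN. Qed.

Lemma pdvd_centers m (x c c' : L) : pdvd m (x - c) -> pdvd m (x - c') -> pdvd m (c - c').
Proof.
move=> xc xc'; have -> : c - c' = (x - c') - (x - c) by ring.
exact: pdvdB.
Qed.

Lemma pdvdM a b (x y : L) : pdvd a x -> pdvd b y -> pdvd (a + b) (x * y).
Proof.
have [->|hx] := eqVneq x 0; first by move=> *; rewrite mul0r pdvd0.
have [->|hy] := eqVneq y 0; first by move=> *; rewrite mulr0 pdvd0.
move=> /val_pdvd /(_ hx) h1 /val_pdvd /(_ hy) h2; apply: pdvd_val; rewrite valM //; lia.
Qed.

Lemma pdvdMl m n (c x : L) : c != 0 -> v c = n -> pdvd (n + m) (c * x) = pdvd m x.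
Proof.
move=> c0 <-; have [->|x0] := eqVneq x 0; first by rewrite mulr0 !pdvd0.
by rewrite /pdvd !mulf_eq0 (negbTE c0) (negbTE x0) valM // lerD2l.
Qed.

Lemma pdvdV_close n (w z : L) : z != 0 -> v z < n -> pdvd n (w - z) ->
  pdvd (n - (v z + v z)) (w^-1 - z^-1).
Proof.
move=> z0 vzn wz; have small : pdvd (v z + 1) (w - z) by apply: pdvdW wz; lia.
have [w0 vw] := valD_dominant z0 small; rewrite addrC subrK in w0 vw.
have -> : w^-1 - z^-1 = (w * z)^-1 * - (w - z) by field; rewrite w0 z0.
rewrite addrC pdvdMl ?pdvdN // ?invr_eq0 ?mulf_neq0 //.
by rewrite valV ?mulf_neq0 // valM // vw.
Qed.

Lemma pdvd_nat n : pdvd 0 n%:R.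
Proof.
elim: n => [|n IH]; first exact: pdvd0.
by rewrite -addn1 natrD pdvdD // pdvd_val // val1.
Qed.

Lemma pdvd_natp n : pdvd 1 (p * n)%:R.
Proof. by rewrite natrM -(addr0 1) pdvdM ?pdvd_nat ?pdvd_val ?valp. Qed.

Lemma p_neq0 : p%:R != 0 :> L.
Proof. by case: p p_prime => // n _; apply: char0. Qed.

Lemma val_nat_coprime (n : nat) : ~~ (p %| n)%N -> n%:R != 0 :> L /\ v n%:R = 0.
Proof.
move=> hn; have n0 : n%:R != 0 :> L by case: n hn => [|n _]; [rewrite dvdn0 | apply: char0].
split=> //; have ge0 := val_pdvd (pdvd_nat n) n0.
have [a _ /dvdnP [q hq]] := Bezoutl n (prime_gt0 p_prime).
have /eqP g1 : coprime p n by rewrite prime_coprime.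
rewrite g1 in hq.
suff : ~ (1 <= v n%:R) by lia.
move=> /pdvd_val hv1.
have han : pdvd 1 (a * n)%:R by rewrite natrM -(add0r 1) pdvdM ?pdvd_nat.
have := pdvdB (pdvd_natp q) han.
by rewrite mulnC -hq natrD addrK /pdvd oner_eq0 val1.
Qed.

Lemma pdvd_exprB1 (z : L) (e : int) n : 0 <= e -> pdvd e (z - 1) -> pdvd e (z ^+ n - 1).
Proof.
move=> he hz; have z_int : pdvd 0 z.
  have -> : z = (z - 1) + 1 by rewrite subrK.
  by apply: pdvdD; [exact: pdvdW hz | rewrite pdvd_val ?val1].
elim: n => [|n IH]; first by rewrite expr0 subrr pdvd0.
have -> : z ^+ n.+1 - 1 = z * (z ^+ n - 1) + (z - 1) by rewrite exprS; ring.
by apply: pdvdD => //; rewrite -(add0r e); apply: pdvdM.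
Qed.

Lemma pdvd_geo_sum (z : L) (e : int) n : 0 <= e -> pdvd e (z - 1) ->
  pdvd e (\sum_(i < n) z ^+ i - n%:R).
Proof.
move=> he hz; rewrite -[n in n%:R]card_ord -sumr_const -sumrB.
by apply: (big_ind (pdvd e)); [exact: pdvd0 | exact: pdvdD | move=> i _; exact: pdvd_exprB1].
Qed.

Lemma val_exprB1_coprime (z : L) (e : int) (b : nat) : 1 <= e -> z != 1 -> v (z - 1) = e ->
  ~~ (p %| b)%N -> z ^+ b != 1 /\ v (z ^+ b - 1) = e.
Proof.
move=> he hz1 hv hb; have [b0 vb] := val_nat_coprime hb.
set S := \sum_(i < b) z ^+ i.
have hS : pdvd (v b%:R + 1) (S - b%:R).
  rewrite vb add0r; apply: (pdvdW he).
  by apply: pdvd_geo_sum; [lia | rewrite pdvd_val ?hv].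
have [S0 vS] := valD_dominant b0 hS; rewrite addrC subrK vb in S0 vS.
have z10 : z - 1 != 0 by rewrite subr_eq0.
rewrite -subr_eq0 subrX1 mulf_neq0 //; split=> //.
by rewrite valM // vS hv addr0.
Qed.

Hypothesis p_gt2 : (2 < p)%N.

(* The cofactor (z^p - 1) / (z - 1) is p plus (z - 1) times an element congruent to
   p (p - 1) / 2, which p divides as p is odd. *)
Lemma val_exprB1_p (z : L) (e : int) : 1 <= e -> z != 1 -> v (z - 1) = e ->
  z ^+ p != 1 /\ v (z ^+ p - 1) = e + 1.
Proof.
move=> he hz1 hv; have hz : pdvd e (z - 1) by rewrite pdvd_val ?hv.
set S := \sum_(i < p) z ^+ i.
have eS : S - p%:R = (z - 1) * \sum_(i < p) \sum_(j < i) z ^+ j.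
  rewrite /S -[p in p%:R]card_ord -sumr_const -sumrB mulr_sumr.
  by apply: eq_bigr => i _; rewrite subrX1.
have hT : pdvd 1 (\sum_(i < p) \sum_(j < i) z ^+ j).
  have -> : \sum_(i < p) \sum_(j < i) z ^+ j =
     \sum_(i < p) (\sum_(j < i) z ^+ j - (i : nat)%:R) + (\sum_(i < p) (i : nat))%:R.
    by rewrite natr_sum -big_split /=; apply: eq_bigr => i _; rewrite subrK.
  apply: pdvdD.
    apply: (big_ind (pdvd 1)); [exact: pdvd0 | exact: pdvdD | move=> i _].
    by apply: (pdvdW he); apply: pdvd_geo_sum hz; lia.
  have : (p %| \sum_(i < p) (i : nat))%N.
    rewrite -(big_mkord xpredT id) bin2_sum prime_dvd_bin //; lia.
  by case/dvdnP => q ->; rewrite mulnC pdvd_natp.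
have hSp : pdvd (v p%:R + 1) (S - p%:R).
  by rewrite eS valp; apply: pdvdW (pdvdM hz hT); lia.
have [S0 vS] := valD_dominant p_neq0 hSp; rewrite addrC subrK valp in S0 vS.
have z10 : z - 1 != 0 by rewrite subr_eq0.
rewrite -subr_eq0 subrX1 mulf_neq0 //; split=> //.
by rewrite valM // vS hv.
Qed.

Lemma val_exprB1 (w : L) (e : int) (N : nat) : 1 <= e -> w != 1 -> v (w - 1) = e ->
  (0 < N)%N -> w ^+ N != 1 /\ v (w ^+ N - 1) = e + (logn p N)%:Z.
Proof.
move=> he hw hv hN.
have hpow (j : nat) : w ^+ (p ^ j) != 1 /\ v (w ^+ (p ^ j) - 1) = e + j%:Z.
  elim: j => [|j [IH1 IH2]]; first by rewrite expn0 expr1 hv addr0.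
  have ej : 1 <= e + j%:Z by lia.
  rewrite expnSr exprM; have [-> ->] := val_exprB1_p ej IH1 IH2; split=> //; lia.
have [b hb eN] := pfactor_coprime p_prime hN.
have [h1 h2] := hpow (logn p N).
have eN1 : 1 <= e + (logn p N)%:Z by lia.
have pb : ~~ (p %| b)%N by rewrite -prime_coprime.
by rewrite {1 2}eN mulnC exprM; apply: val_exprB1_coprime.
Qed.

Lemma exprB1_separated (w : L) (e : int) (N J : nat) : 1 <= e -> w != 1 -> v (w - 1) = e ->
  (0 < N)%N -> (N < p ^ J)%N -> ~~ pdvd (e + J%:Z) (w ^+ N - 1).
Proof.
move=> he hw hv hN hNJ; have [h1 h2] := val_exprB1 he hw hv hN.
have hlog : (logn p N < J)%N.
  rewrite -(ltn_exp2l _ _ (prime_gt1 p_prime)); apply: leq_ltn_trans hNJ.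
  by rewrite dvdn_leq // pfactor_dvdnn.
rewrite /pdvd negb_or subr_eq0 h1 /= -ltNge h2; lia.
Qed.

Variable Qp : {pred L}.
Hypothesis Qp_subfield : is_subfield Qp.
Hypothesis Qp_residue : forall x, x \in Qp -> x != 0 -> 0 <= v x ->
  exists n : nat, vclose v 1 x n%:R.

Lemma Qp0 : 0 \in Qp. Proof. by case: Qp_subfield => [[]]. Qed.
Lemma Qp1 : 1 \in Qp. Proof. by case: Qp_subfield => [[]]. Qed.
Lemma QpD (x y : L) : x \in Qp -> y \in Qp -> x + y \in Qp.
Proof. by case: Qp_subfield => _ h _ _ _; apply: h. Qed.
Lemma QpN (x : L) : x \in Qp -> - x \in Qp.
Proof. by case: Qp_subfield => _ _ h _ _; apply: h. Qed.
Lemma QpM (x y : L) : x \in Qp -> y \in Qp -> x * y \in Qp.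
Proof. by case: Qp_subfield => _ _ _ h _; apply: h. Qed.
Lemma QpV (x : L) : x \in Qp -> x^-1 \in Qp.
Proof. by case: Qp_subfield => _ _ _ _ h; apply: h. Qed.
Lemma QpB (x y : L) : x \in Qp -> y \in Qp -> x - y \in Qp.
Proof. by move=> hx hy; rewrite QpD ?QpN. Qed.
Lemma Qp_div (x y : L) : x \in Qp -> y \in Qp -> x / y \in Qp.
Proof. by move=> hx hy; rewrite QpM ?QpV. Qed.
Lemma QpX (x : L) n : x \in Qp -> x ^+ n \in Qp.
Proof. by move=> hx; elim: n => [|n IH]; rewrite ?expr0 ?Qp1 // exprS QpM. Qed.
Lemma Qp_nat n : n%:R \in Qp.
Proof. by elim: n => [|n IH]; rewrite ?Qp0 // -addn1 natrD QpD ?Qp1. Qed.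

Lemma exists_val (e : int) : exists pi : L, [/\ pi \in Qp, pi != 0 & v pi = e].
Proof.
have pX0 n : p%:R ^+ n != 0 :> L by rewrite expf_neq0 ?p_neq0.
have vpX n : v (p%:R ^+ n) = n%:Z by rewrite valX ?p_neq0 // valp mulr1.
case: e => n; first by exists (p%:R ^+ n); rewrite QpX ?Qp_nat.
exists (p%:R ^+ n.+1)^-1; split; rewrite ?QpV ?QpX ?Qp_nat ?invr_eq0 //.
by rewrite valV // vpX NegzE.
Qed.

(* Base-p expansion: peel off one digit with [Qp_residue] and divide by p. *)
Lemma pdvd_nat_approx (j : nat) (z : L) : z \in Qp -> pdvd 0 z ->
  exists2 N : nat, (N < p ^ j)%N & pdvd j%:Z (z - N%:R).
Proof.
elim: j z => [|j IH] z hz hz0; first by exists 0%N; rewrite ?expn0 ?subr0.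
have [->|z0] := eqVneq z 0.
  by exists 0%N; rewrite ?expn_gt0 ?prime_gt0 ?subr0 ?pdvd0.
have [n /vcloseE hn] := Qp_residue hz z0 (val_pdvd hz0 z0).
set r := (n %% p)%N; set z' := (z - r%:R) / p%:R.
have hzr : pdvd 1 (z - r%:R).
  have -> : z - r%:R = (z - n%:R) + (n %/ p * p)%:R.
    by rewrite [in n%:R](divn_eq n p) natrD; ring.
  by rewrite pdvdD // mulnC pdvd_natp.
have hz' : z' \in Qp by rewrite Qp_div ?QpB ?Qp_nat.
have hz'0 : pdvd 0 z'.
  have := pdvdM hzr (_ : pdvd (-1) p%:R^-1); rewrite addrN; apply.
  by rewrite pdvd_val // valV ?p_neq0 // valp.
have [N' hN' hdv] := IH z' hz' hz'0.
exists (r + p * N')%N.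
  have : (r < p)%N by rewrite ltn_pmod // prime_gt0.
  by rewrite expnS; move: hN'; clear; nia.
have -> : z - (r + p * N')%:R = p%:R * (z' - N'%:R).
  by rewrite /z' mulrBr mulrCA mulfV ?p_neq0 // mulr1 natrD natrM opprD addrA.
by rewrite -[_.+1%:Z]/(1 + j%:Z); apply: pdvdM => //; rewrite pdvd_val ?valp.
Qed.

Lemma pdvd_ball_digit (c pi : L) (e : int) (J : nat) : c \in Qp -> pi \in Qp -> pi != 0 ->
  v pi = e -> forall q, q \in Qp -> pdvd e (q - c) ->
  exists2 N : nat, (N < p ^ J)%N & pdvd (e + J%:Z) (q - c - N%:R * pi).
Proof.
move=> hc hpi pi0 vpi q hq hqc.
have hq' : (q - c) / pi \in Qp by rewrite Qp_div ?QpB.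
have hq0 : pdvd 0 ((q - c) / pi).
  have := pdvdM hqc (_ : pdvd (- e) pi^-1); rewrite addrN; apply.
  by rewrite pdvd_val // valV // vpi.
have [N hN hd] := pdvd_nat_approx J hq' hq0.
exists N => //; have -> : q - c - N%:R * pi = pi * ((q - c) / pi - N%:R) by field.
by apply: pdvdM => //; rewrite pdvd_val ?vpi.
Qed.

(* The ball c + p^e Z_p consists of p^J balls of radius p^(e+J) ([pdvd_ball_digit]), so p^J
   points of it lying in pairwise distinct such balls meet all of them. *)
Lemma separated_family_covers (c : L) (e : int) (J : nat) (w : nat -> L) : c \in Qp ->
  (forall m, (m < p ^ J)%N -> w m \in Qp /\ pdvd e (w m - c)) ->
  (forall m m', (m < p ^ J)%N -> (m' < p ^ J)%N -> m <> m' -> ~~ pdvd (e + J%:Z) (w m - w m')) ->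
  forall z, z \in Qp -> pdvd e (z - c) -> exists2 m, (m < p ^ J)%N & pdvd (e + J%:Z) (w m - z).
Proof.
move=> hc hw hsep z hz hzc.
have [pi [hpi pi0 vpi]] := exists_val e.
have digit := pdvd_ball_digit J hc hpi pi0 vpi.
have P0 : (0 < p ^ J)%N by rewrite expn_gt0 prime_gt0.
pose good (m N : 'I_(p ^ J)) := pdvd (e + J%:Z) (w m - c - (N : nat)%:R * pi).
pose phi (m : 'I_(p ^ J)) := odflt (Ordinal P0) [pick N | good m N].
have phiP (m : 'I_(p ^ J)) : good m (phi m).
  rewrite /phi; case: pickP => [N //|none].
  have [hwm hwc] := hw m (ltn_ord m); have [N hN hd] := digit _ hwm hwc.
  by move: (none (Ordinal hN)); rewrite /good /= hd.
have phi_inj : injective phi.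
  move=> m m' he; case: (eqVneq (m : nat) m') => [/val_inj //| /eqP hne].
  case/negP: (hsep m m' (ltn_ord m) (ltn_ord m') hne).
  have -> : w m - w m' = (w m - c - (phi m : nat)%:R * pi) - (w m' - c - (phi m' : nat)%:R * pi).
    by rewrite he; ring.
  exact: pdvdB (phiP m) (phiP m').
have [g phiK gK] := injF_bij phi_inj.
have [Nz hNz hdz] := digit z hz hzc.
exists (g (Ordinal hNz)) => //.
have := phiP (g (Ordinal hNz)); rewrite /good gK /= => hg.
have -> : w (g (Ordinal hNz)) - z =
   (w (g (Ordinal hNz)) - c - Nz%:R * pi) - (z - c - Nz%:R * pi) by ring.
exact: pdvdB.
Qed.


Section RecurrenceSequence.
Variables (a : nat -> L) (r s c1 c2 lam1 lam2 : L) (l : nat) (k : int).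
Hypothesis a_Qp : forall n, a n \in Qp.
Hypothesis r_Qp : r \in Qp.
Hypothesis a_rec : forall n : nat, a n.+2 = r * a n.+1 + s * a n.
Hypothesis a_closed_form : forall n : nat, a n = c1 * lam1 ^+ n + c2 * lam2 ^+ n.
Hypotheses (c1_neq0 : c1 != 0) (c2_neq0 : c2 != 0) (lam1_neq0 : lam1 != 0) (lam2_neq0 : lam2 != 0).
Hypothesis val_lam12 : v lam1 = v lam2.
Hypothesis u_not_root1 : forall n : nat, (0 < n)%N -> (lam2 / lam1) ^+ n != 1.
Hypothesis u_order : order_modp v (lam2 / lam1) l.
Hypothesis k_def : k = v ((lam2 / lam1) ^+ l - 1).

Local Notation u := (lam2 / lam1).
Local Notation y := (- (c1 / c2)).
Local Notation al := ((lam1 + lam2) / 2%:R).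
Local Notation vd := (v (lam2 - lam1)).
(* [a n.+1 / a n = F (u ^+ n)] ([ratioE]) and [F = al + G^-1] ([F_G]): [G] is the chart
   at the pole [y] of [F]. *)
Local Notation F x := (lam1 * (u * x - y) / (x - y)).
Local Notation G x := (2%:R * (x - y) / ((lam2 - lam1) * (x + y))).
Local Notation Lam := (vclosure v (fun _ => True) (fun z => exists n : nat, z = u ^+ n)).

Lemma u_neq0 : u != 0. Proof. by rewrite mulf_neq0 ?invr_eq0. Qed.
Lemma expu_neq0 n : u ^+ n != 0. Proof. by rewrite expf_neq0 // u_neq0. Qed.
Lemma val_expu n : v (u ^+ n) = 0.
Proof. by rewrite valX ?u_neq0 // val_div // val_lam12 subrr mulr0. Qed.
Lemma pdvd_expu n : pdvd 0 (u ^+ n). Proof. by rewrite pdvd_val ?val_expu. Qed.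
Lemma y_neq0 : y != 0. Proof. by rewrite oppr_eq0 mulf_neq0 ?invr_eq0. Qed.

Lemma lam2B1_neq0 : lam2 - lam1 != 0.
Proof.
by apply: contraNneq (u_not_root1 (ltn0Sn 0)) => /subr0_eq ->; rewrite expr1 divff.
Qed.

Lemma aE n : a n = c2 * lam1 ^+ n * (u ^+ n - y).
Proof. by rewrite a_closed_form exprMn exprVn; field; rewrite c2_neq0 expf_neq0. Qed.

Lemma a_eq0 n : (a n == 0) = (u ^+ n == y).
Proof. by rewrite aE !mulf_eq0 (negbTE c2_neq0) expf_eq0 (negbTE lam1_neq0) andbF subr_eq0. Qed.

(* The side conditions that [field] produces for the denominators [x - y] and [x + y]. *)
Lemma c2_subN_neq0 x : x != y -> x * c2 - - c1 != 0.
Proof. by move=> xy; rewrite (_ : _ - _ = c2 * (x - y)) ?mulf_neq0 ?subr_eq0 //; field. Qed.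

Lemma c2_sub_neq0 x : x + y != 0 -> x * c2 - c1 != 0.
Proof. by move=> xy; rewrite (_ : _ - _ = c2 * (x + y)) ?mulf_neq0 //; field. Qed.

Lemma ratioE n : u ^+ n != y -> a n.+1 / a n = F (u ^+ n).
Proof.
move=> uy; rewrite !aE !exprS; field.
by rewrite c2_neq0 c2_subN_neq0 // lam1_neq0 expf_neq0.
Qed.

(* The characteristic polynomial of the recurrence vanishes at lam1 and lam2. *)
Lemma r_eq : r = lam1 + lam2.
Proof.
set P1 := lam1 ^+ 2 - r * lam1 - s; set P2 := lam2 ^+ 2 - r * lam2 - s.
have E0 : c1 * P1 + c2 * P2 = 0.
  have -> : c1 * P1 + c2 * P2 = a 2 - (r * a 1 + s * a 0).
    by rewrite !a_closed_form /P1 /P2; ring.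
  by rewrite (a_rec 0) subrr.
have E1 : c1 * lam1 * P1 + c2 * lam2 * P2 = 0.
  have -> : c1 * lam1 * P1 + c2 * lam2 * P2 = a 3 - (r * a 2 + s * a 1).
    by rewrite !a_closed_form /P1 /P2; ring.
  by rewrite (a_rec 1) subrr.
have : c1 * P1 * (lam2 - lam1) = 0.
  have -> : c1 * P1 * (lam2 - lam1) =
      lam2 * (c1 * P1 + c2 * P2) - (c1 * lam1 * P1 + c2 * lam2 * P2) by ring.
  by rewrite E0 E1 mulr0 subrr.
move/eqP; rewrite !mulf_eq0 (negbTE c1_neq0) (negbTE lam2B1_neq0) orbF /= => /eqP P10.
move: E0; rewrite P10 mulr0 add0r => /eqP; rewrite mulf_eq0 (negbTE c2_neq0) /= => /eqP P20.
have : (lam2 - lam1) * (lam1 + lam2 - r) = 0.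
  have -> : (lam2 - lam1) * (lam1 + lam2 - r) = P2 - P1 by rewrite /P1 /P2; ring.
  by rewrite P10 P20 subrr.
by move/eqP; rewrite mulf_eq0 (negbTE lam2B1_neq0) subr_eq0 => /eqP.
Qed.

Lemma two_unit : 2%:R != 0 :> L /\ v 2%:R = 0.
Proof. by apply: val_nat_coprime; apply/negP => /dvdn_leq; lia. Qed.

Lemma four_unit : 4%:R != 0 :> L /\ v 4%:R = 0.
Proof.
have [t0 t1] := two_unit.
by rewrite (_ : 4%:R = 2%:R * 2%:R) ?mulf_neq0 ?valM ?t1 // -natrM.
Qed.

Lemma al_Qp : al \in Qp.
Proof. by rewrite -r_eq Qp_div ?Qp_nat. Qed.

Lemma l_gt0 : (0 < l)%N. Proof. by case: u_order. Qed.
Lemma expu_l_neq1 : u ^+ l != 1. Proof. exact: u_not_root1 l_gt0. Qed.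

Lemma k_ge1 : 1 <= k.
Proof.
case: u_order => _ /vcloseE h _; rewrite k_def; apply: val_pdvd h _.
by rewrite subr_eq0 expu_l_neq1.
Qed.

Lemma val_expuB1_lt_order j : (0 < j)%N -> (j < l)%N -> u ^+ j - 1 != 0 /\ v (u ^+ j - 1) = 0.
Proof.
move=> j0 jl; case: u_order => _ _ /(_ j j0 jl) hj.
have : ~~ pdvd 1 (u ^+ j - 1) by apply/negP => /vcloseE.
rewrite /pdvd negb_or => /andP [h0 /= hlt]; split => //.
have one : pdvd 0 1 by rewrite pdvd_val ?val1.
have ge0 : 0 <= v (u ^+ j - 1) := val_pdvd (pdvdB (pdvd_expu j) one) h0.
lia.
Qed.

Lemma val_expuB_lt_order i j : (i < l)%N -> (j < l)%N -> i <> j ->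
  u ^+ i - u ^+ j != 0 /\ v (u ^+ i - u ^+ j) = 0.
Proof.
move=> il jl ij; wlog lt_ij : i j il jl ij / (i < j)%N => [hwlog|].
  case: (ltngtP i j) => [lt|gt|eq] //; first exact: hwlog.
  by rewrite -opprB oppr_eq0 valN; apply: hwlog => // /esym.
have ji0 : (0 < j - i)%N by rewrite subn_gt0.
have [h1 h2] := val_expuB1_lt_order ji0 (leq_ltn_trans (leq_subr i j) jl).
have -> : u ^+ i - u ^+ j = - u ^+ i * (u ^+ (j - i) - 1).
  by rewrite -{1}(subnKC (ltnW lt_ij)) exprD; ring.
rewrite mulf_neq0 ?oppr_eq0 ?expu_neq0 //.
by rewrite valM ?oppr_eq0 ?expu_neq0 // valN val_expu h2.
Qed.

Lemma pdvd_expu_class i m : pdvd k (u ^+ (i + l * m) - u ^+ i).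
Proof.
have -> : u ^+ (i + l * m) - u ^+ i = u ^+ i * ((u ^+ l) ^+ m - 1) by rewrite exprD exprM; ring.
rewrite -(add0r k); apply: pdvdM (pdvd_expu i) _.
by apply: pdvd_exprB1; [have := k_ge1; lia | rewrite pdvd_val // -k_def].
Qed.

Lemma pdvd_expu_mod n : pdvd k (u ^+ n - u ^+ (n %% l)).
Proof. by rewrite {1}(divn_eq n l) addnC mulnC pdvd_expu_class. Qed.

(* Within a class [i + l * m], lifting the exponent gives v (u^(i + l m) - u^(i + l m')) =
   k + logn p (m - m'). *)
Lemma expu_class_separated i m m' J : (m < p ^ J)%N -> (m' < p ^ J)%N -> m <> m' ->
  ~~ pdvd (k + J%:Z) (u ^+ (i + l * m) - u ^+ (i + l * m')).
Proof.
move=> mJ m'J mm; wlog lt_mm : m m' mJ m'J mm / (m' < m)%N => [hwlog|].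
  case: (ltngtP m m') => [lt|gt|//]; last exact: hwlog.
  by rewrite -opprB pdvdN; apply: hwlog => // /esym.
have -> : u ^+ (i + l * m) - u ^+ (i + l * m') = u ^+ (i + l * m') * ((u ^+ l) ^+ (m - m') - 1).
  by rewrite -{1}(subnKC (ltnW lt_mm)) mulnDr addnA exprD [in X in X - _]exprM; ring.
rewrite -[k + _]add0r pdvdMl ?expu_neq0 ?val_expu //.
apply: exprB1_separated; rewrite -?k_def ?k_ge1 ?expu_l_neq1 ?subn_gt0 //.
exact: leq_ltn_trans (leq_subr _ _) mJ.
Qed.

Lemma pdvd_class_y i n : pdvd k (u ^+ i - y) -> pdvd k (u ^+ (i + l * n) - y).
Proof.
move=> iy; rewrite -(subrK (u ^+ i) (u ^+ (i + l * n))) -addrA.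
by rewrite pdvdD ?pdvd_expu_class.
Qed.

Lemma val_y_of_pdvd i : pdvd k (u ^+ i - y) -> v y = 0.
Proof.
move=> iy; have small : pdvd (v (u ^+ i) + 1) (- (u ^+ i - y)).
  by rewrite val_expu add0r pdvdN (pdvdW k_ge1).
by have [_] := valD_dominant (expu_neq0 i) small; rewrite opprB addrC subrK val_expu.
Qed.

Lemma val_addy x : v y = 0 -> pdvd k (x - y) -> x + y != 0 /\ v (x + y) = 0.
Proof.
move=> vy xy; have [t0 t1] := two_unit.
have y2 : 2%:R * y != 0 by rewrite mulf_neq0 ?y_neq0.
have vy2 : v (2%:R * y) = 0 by rewrite valM ?y_neq0 // t1 vy.
have small : pdvd (v (2%:R * y) + 1) (x - y) by rewrite vy2 add0r (pdvdW k_ge1).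
have -> : x + y = 2%:R * y + (x - y) by rewrite mulr2n mulrDl !mul1r; ring.
by have [-> ->] := valD_dominant y2 small.
Qed.

Lemma FB x x' : x != y -> x' != y ->
  F x - F x' = (lam1 - lam2) * y / ((x - y) * (x' - y)) * (x - x').
Proof.
by move=> xy x'y; field; rewrite c2_neq0 !c2_subN_neq0 // lam1_neq0.
Qed.

Lemma val_lam1B2 : v (lam1 - lam2) = vd. Proof. by rewrite -opprB valN. Qed.

Lemma pdvd_FB m x x' : x != y -> x' != y ->
  pdvd (vd + v y - (v (x - y) + v (x' - y)) + m) (F x - F x') = pdvd m (x - x').
Proof.
move=> xy x'y; have xy0 : x - y != 0 by rewrite subr_eq0.
have x'y0 : x' - y != 0 by rewrite subr_eq0.
have l12 : lam1 - lam2 != 0 by rewrite -opprB oppr_eq0 lam2B1_neq0.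
have num0 : (lam1 - lam2) * y != 0 by rewrite mulf_neq0 ?y_neq0.
have den0 : (x - y) * (x' - y) != 0 by rewrite mulf_neq0.
rewrite FB // pdvdMl //; first by rewrite mulf_neq0 ?invr_eq0.
by rewrite val_div // !valM ?y_neq0 // val_lam1B2.
Qed.

Lemma F_subal x : x != y -> F x - al = (lam2 - lam1) * (x + y) / (2%:R * (x - y)).
Proof.
by move=> xy; field; rewrite c2_neq0 c2_subN_neq0 // two_unit.1 lam1_neq0.
Qed.

Lemma val_F_subal x : x != y -> x + y != 0 -> v (x + y) = 0 ->
  F x - al != 0 /\ v (F x - al) = vd - v (x - y).
Proof.
move=> xy xy0 vxy; have [t0 t1] := two_unit; have xy1 : x - y != 0 by rewrite subr_eq0.
rewrite F_subal // mulf_neq0 ?invr_eq0 ?mulf_neq0 ?lam2B1_neq0 //; split=> //.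
by rewrite val_div ?mulf_neq0 ?lam2B1_neq0 // !valM ?lam2B1_neq0 // vxy t1 addr0 add0r.
Qed.

Lemma F_G x : x != y -> x + y != 0 -> F x = al + (G x)^-1.
Proof.
move=> xy xy0; field.
by rewrite c2_neq0 c2_subN_neq0 // c2_sub_neq0 // lam2B1_neq0 two_unit.1 lam1_neq0.
Qed.

Lemma pdvd_G m x : x + y != 0 -> v (x + y) = 0 -> pdvd (m - vd) (G x) = pdvd m (x - y).
Proof.
move=> xy0 vxy; have [t0 t1] := two_unit.
have c0 : 2%:R / ((lam2 - lam1) * (x + y)) != 0.
  by rewrite mulf_neq0 ?invr_eq0 ?mulf_neq0 ?lam2B1_neq0.
have vc : v (2%:R / ((lam2 - lam1) * (x + y))) = - vd.
  by rewrite val_div ?mulf_neq0 ?lam2B1_neq0 // valM ?lam2B1_neq0 // t1 vxy addr0 sub0r.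
by rewrite mulrAC [m - vd]addrC pdvdMl.
Qed.

Lemma pdvd_GB m x x' : x + y != 0 -> v (x + y) = 0 -> x' + y != 0 -> v (x' + y) = 0 ->
  pdvd (v y - vd + m) (G x - G x') = pdvd m (x - x').
Proof.
move=> xy0 vxy x'y0 vx'y; have [f0 f1] := four_unit.
have -> : G x - G x' = 4%:R * y / ((lam2 - lam1) * (x + y) * (x' + y)) * (x - x').
  by field; rewrite c2_neq0 !c2_sub_neq0 // lam2B1_neq0.
rewrite pdvdMl //; first by rewrite !mulf_neq0 ?invr_eq0 ?mulf_neq0 ?y_neq0 ?lam2B1_neq0.
rewrite val_div ?mulf_neq0 ?y_neq0 ?lam2B1_neq0 // !valM ?y_neq0 ?mulf_neq0 ?lam2B1_neq0 //.
by rewrite f1 vxy vx'y; ring.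
Qed.

Lemma F_Qp n : u ^+ n != y -> F (u ^+ n) \in Qp.
Proof. by move=> uy; rewrite -ratioE // Qp_div. Qed.

Lemma G_Qp n : u ^+ n + y != 0 -> G (u ^+ n) \in Qp.
Proof.
have [->|uy] := eqVneq (u ^+ n) y; first by rewrite subrr mulr0 mul0r Qp0.
move=> uy0; rewrite -[G _]invrK -[(G _)^-1](addKr al) -F_G //.
by rewrite QpV // QpD ?QpN ?al_Qp ?F_Qp.
Qed.

Lemma exists_nat_ge (m e : int) : exists J : nat, m <= e + J%:Z.
Proof. by exists `|m - e|%N; have := ler_norm (m - e); rewrite -abszE; lia. Qed.

Lemma finite_int_ub (f : nat -> int) n : exists M, forall i, (i < n)%N -> f i <= M.
Proof.
elim: n => [|n [M fM]]; first by exists 0.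
exists (Num.max M (f n)) => i; rewrite ltnS leq_eqVlt => /orP [/eqP -> | ?].
  by rewrite le_max lexx orbT.
by rewrite le_max fM.
Qed.

Lemma kepler_setE x : kepler_set v Qp a x <->
  x \in Qp /\ forall M : int, exists n, u ^+ n != y /\ pdvd M (F (u ^+ n) - x).
Proof.
split=> [[xQ xcl]|[xQ xcl]]; split=> // M.
  have [_ [[n [an0 ->]] /vcloseE close]] := xcl M.
  by exists n; rewrite -a_eq0 -ratioE // -a_eq0.
have [n [uy close]] := xcl M; exists (F (u ^+ n)); split; last exact/vcloseE.
by exists n; rewrite a_eq0 ratioE.
Qed.

Section ClassDensity.
Variables (i : nat) (A : int).
Hypothesis class_far : forall m, u ^+ (i + l * m) != y /\ v (u ^+ (i + l * m) - y) = A.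

Lemma F_class_dense z : z \in Qp -> pdvd (vd + v y - (A + A) + k) (z - F (u ^+ i)) ->
  forall J : nat, exists m, pdvd (vd + v y - (A + A) + k + J%:Z) (F (u ^+ (i + l * m)) - z).
Proof.
move=> zQ zball J.
have [uy vuy] : u ^+ i != y /\ v (u ^+ i - y) = A by rewrite -[i]addn0 -(muln0 l).
have Fclass m : pdvd (vd + v y - (A + A) + k) (F (u ^+ (i + l * m)) - F (u ^+ i)).
  by have [? vm] := class_far m; rewrite -{1}vm -vuy pdvd_FB ?pdvd_expu_class.
have Fsep m m' : (m < p ^ J)%N -> (m' < p ^ J)%N -> m <> m' ->
    ~~ pdvd (vd + v y - (A + A) + k + J%:Z) (F (u ^+ (i + l * m)) - F (u ^+ (i + l * m'))).
  move=> mJ m'J mm'; have [? vm] := class_far m; have [? vm'] := class_far m'.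
  by rewrite -[_ + k + _]addrA -{1}vm -vm' pdvd_FB ?expu_class_separated.
have [m _ close] := separated_family_covers (F_Qp uy)
  (fun m _ => conj (F_Qp (class_far m).1) (Fclass m)) Fsep zQ zball.
by exists m.
Qed.

Lemma ball_sub_kepler z : z \in Qp -> pdvd (vd + v y - (A + A) + k) (z - F (u ^+ i)) ->
  kepler_set v Qp a z.
Proof.
move=> zQ zball; apply/kepler_setE; split=> // M.
have [J MJ] := exists_nat_ge M (vd + v y - (A + A) + k).
have [m close] := F_class_dense zQ zball J.
by exists (i + l * m)%N; split; [exact: (class_far m).1 | exact: pdvdW close].
Qed.

End ClassDensity.

Section NearClass.
Variable i : nat.
Hypothesis class_near : pdvd k (u ^+ i - y).

Lemma val_y : v y = 0. Proof. exact: val_y_of_pdvd class_near. Qed.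

Lemma class_near_addy m : u ^+ (i + l * m) + y != 0 /\ v (u ^+ (i + l * m) + y) = 0.
Proof. exact: val_addy val_y (pdvd_class_y m class_near). Qed.

Lemma G_class_dense z : z \in Qp -> pdvd (k - vd) z ->
  forall J : nat, exists m, pdvd (k - vd + J%:Z) (G (u ^+ (i + l * m)) - z).
Proof.
move=> zQ zball J.
have Gclass m : G (u ^+ (i + l * m)) \in Qp /\ pdvd (k - vd) (G (u ^+ (i + l * m)) - 0).
  have [? ?] := class_near_addy m.
  by rewrite subr0 pdvd_G ?G_Qp ?pdvd_class_y.
have Gsep m m' : (m < p ^ J)%N -> (m' < p ^ J)%N -> m <> m' ->
    ~~ pdvd (k - vd + J%:Z) (G (u ^+ (i + l * m)) - G (u ^+ (i + l * m'))).
  move=> mJ m'J mm'; have [? ?] := class_near_addy m; have [? ?] := class_near_addy m'.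
  have -> : k - vd + J%:Z = v y - vd + (k + J%:Z) by rewrite val_y; ring.
  by rewrite pdvd_GB ?expu_class_separated.
have zball0 : pdvd (k - vd) (z - 0) by rewrite subr0.
have [m _ close] := separated_family_covers Qp0 (fun m _ => Gclass m) Gsep zQ zball0.
by exists m.
Qed.

(* Where [G] is small, [F = al + G^-1] is large: the class of [y] fills the outside of a ball
   around [al]. *)
Lemma far_sub_kepler R : R \in Qp -> R != al -> v (R - al) <= vd - k -> kepler_set v Qp a R.
Proof.
move=> RQ Ral vRal; have Ral0 : R - al != 0 by rewrite subr_eq0.
set z := (R - al)^-1.
have z0 : z != 0 by rewrite invr_eq0.
have vz : v z = - v (R - al) by rewrite valV.
have zQ : z \in Qp by rewrite QpV ?QpB ?al_Qp.
have zball : pdvd (k - vd) z by rewrite pdvd_val // vz; move: vRal; clear; lia.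
apply/kepler_setE; split=> // M.
have [J1 MJ1] := exists_nat_ge (M + (v z + v z)) (k - vd).
have [J2 MJ2] := exists_nat_ge (v z + 1) (k - vd).
have [m close] := G_class_dense zQ zball (J1 + J2).
have [xy0 vxy] := class_near_addy m; set x := u ^+ (i + l * m) in close xy0 vxy *.
have small : pdvd (v z + 1) (G x - z) by apply: pdvdW close; move: MJ2; clear; lia.
have [Gx0 _] := valD_dominant z0 small; rewrite addrC subrK in Gx0.
have xy : x != y by apply: contraNneq Gx0 => ->; rewrite subrr mulr0 mul0r.
exists (i + l * m)%N; split=> //.
have -> : F x - R = (G x)^-1 - z^-1 by rewrite F_G // /z invrK; ring.
by apply: pdvdW (pdvdV_close z0 _ close); move: MJ1 MJ2; clear; lia.
Qed.

End NearClass.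

Lemma Lam_y_class : Lam y -> exists2 i, (i < l)%N & pdvd k (u ^+ i - y).
Proof.
case=> _ /(_ k) [_ [[n ->] /vcloseE close]].
exists (n %% l)%N; first by rewrite ltn_pmod ?l_gt0.
by rewrite -(subrK (u ^+ n) (u ^+ _)) -addrA pdvdD // -opprB pdvdN pdvd_expu_mod.
Qed.

Lemma Lam_y_of_class i : pdvd k (u ^+ i - y) -> Lam y.
Proof.
move=> iy; split=> // M; have [J MJ] := exists_nat_ge M k.
have [m close] := G_class_dense iy Qp0 (pdvd0 _) J.
have [? ?] := class_near_addy iy m.
exists (u ^+ (i + l * m)); split; first by exists (i + l * m)%N.
have e : k - vd + J%:Z = k + J%:Z - vd by ring.
rewrite e subr0 in close.
by apply/vcloseE; apply: pdvdW MJ _; rewrite -pdvd_G.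
Qed.

Lemma val_expuBy_cases i : u ^+ i != y ->
  [/\ v y < 0 -> v (u ^+ i - y) = v y, 0 < v y -> v (u ^+ i - y) = 0
    & v y = 0 -> 0 <= v (u ^+ i - y)].
Proof.
move=> uy; have uy0 : u ^+ i - y != 0 by rewrite subr_eq0.
split=> vy.
- have ny0 : - y != 0 by rewrite oppr_eq0 y_neq0.
  have small : pdvd (v (- y) + 1) (u ^+ i).
    by rewrite pdvd_val // valN val_expu; move: vy; clear; lia.
  by have [_] := valD_dominant ny0 small; rewrite addrC valN.
- have small : pdvd (v (u ^+ i) + 1) (- y).
    by rewrite pdvd_val // valN val_expu; move: vy; clear; lia.
  by have [_] := valD_dominant (expu_neq0 i) small; rewrite val_expu.
- by apply: val_pdvd uy0; rewrite pdvdB ?pdvd_expu ?pdvd_val ?vy.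
Qed.

Section YNotInLam.
Hypothesis y_notin_Lam : ~ Lam y.

Lemma expu_neq_y n : u ^+ n != y.
Proof.
apply/eqP=> uy; apply: y_notin_Lam; split=> // M.
by exists (u ^+ n); split; [exists n | left].
Qed.

Lemma val_expuBy_lt_k i : v (u ^+ i - y) < k.
Proof.
have : ~~ pdvd k (u ^+ i - y) by apply/negP => /Lam_y_of_class.
by rewrite /pdvd negb_or subr_eq0 expu_neq_y ltNge.
Qed.

Lemma val_class_y i m : v (u ^+ (i + l * m) - y) = v (u ^+ i - y).
Proof.
have uy0 : u ^+ i - y != 0 by rewrite subr_eq0 expu_neq_y.
have small : pdvd (v (u ^+ i - y) + 1) (u ^+ (i + l * m) - u ^+ i).
  by apply: pdvdW (pdvd_expu_class i m); move: (val_expuBy_lt_k i); clear; lia.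
by have [_] := valD_dominant uy0 small; rewrite addrC addrA subrK.
Qed.

(* [v (u^i - y)] is [v y] if [v y < 0], is [0] if [v y > 0], and lies in [[0, k)] if [v y = 0]. *)
Lemma val_expuBy_lt i j : v (u ^+ i - y) < v (u ^+ j - y) + k.
Proof.
have [yi0 yi1 yi2] := val_expuBy_cases (expu_neq_y i).
have [yj0 yj1 yj2] := val_expuBy_cases (expu_neq_y j).
move: (val_expuBy_lt_k i) k_ge1 yi0 yi1 yj0 yj1 yj2; clear; lia.
Qed.

Local Notation rad i := (vd + v y - (v (u ^+ i - y) + v (u ^+ i - y)) + k).

Lemma kepler_sub_far_balls x : kepler_set v Qp a x ->
  exists2 i, (i < l)%N & pdvd (rad i) (x - F (u ^+ i)).
Proof.
case/kepler_setE => xQ xcl; have [M radM] := finite_int_ub (fun i => rad i) l.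
have [n [_ close]] := xcl M; set i := (n %% l)%N.
have il : (i < l)%N by rewrite ltn_pmod ?l_gt0.
exists i => //; have vn : v (u ^+ n - y) = v (u ^+ i - y).
  by rewrite {1}(divn_eq n l) addnC mulnC val_class_y.
have Fni : pdvd (rad i) (F (u ^+ n) - F (u ^+ i)).
  by rewrite -{1}vn pdvd_FB ?expu_neq_y ?pdvd_expu_mod.
have -> : x - F (u ^+ i) = - (F (u ^+ n) - x) + (F (u ^+ n) - F (u ^+ i)) by ring.
by apply: pdvdD Fni; rewrite pdvdN; apply: pdvdW (radM i il) close.
Qed.

Lemma far_ball_sub_kepler i x : x \in Qp -> pdvd (rad i) (x - F (u ^+ i)) ->
  kepler_set v Qp a x.
Proof. by apply: ball_sub_kepler => m; rewrite expu_neq_y val_class_y. Qed.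

(* The centres F (u^i), F (u^j) are at valuation vd + v y - A_i - A_j, which is below both radii. *)
Lemma far_balls_disjoint i j x : (i < l)%N -> (j < l)%N -> i <> j ->
  ~ (pdvd (rad i) (x - F (u ^+ i)) /\ pdvd (rad j) (x - F (u ^+ j))).
Proof.
move=> il jl ij [xi xj]; have [uij0 vuij] := val_expuB_lt_order il jl ij.
have sep : ~~ pdvd 1 (u ^+ i - u ^+ j) by rewrite /pdvd negb_or uij0 vuij.
rewrite -(pdvd_FB _ (expu_neq_y i) (expu_neq_y j)) in sep; case/negP: sep.
apply: pdvd_centers; [apply: pdvdW xi; move: (val_expuBy_lt i j)|
                      apply: pdvdW xj; move: (val_expuBy_lt j i)].
(* [set] merges copies of [v (u ^+ i - y)] that differ only in inferred instances and which
   [lia] would otherwise treat as distinct atoms. *)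
all: by set Ai := v (u ^+ i - y); set Aj := v (u ^+ j - y); clear; lia.
Qed.

Lemma kepler_set_y_notin_Lam : let B := fun i : nat => pball v Qp (a i.+1 / a i)
    (v (c1 / c2) + v (lam2 - lam1) - 2 * v (c1 / c2 + (lam2 / lam1) ^+ i) + k) in
  (forall x, kepler_set v Qp a x <-> exists2 i : nat, (i < l)%N & B i x) /\
  (forall i j : nat, (i < l)%N -> (j < l)%N -> i <> j -> forall x, ~ (B i x /\ B j x)).
Proof.
move=> B; have BE i x : B i x <-> x \in Qp /\ pdvd (rad i) (x - F (u ^+ i)).
  have e1 : v (c1 / c2) = v y by rewrite valN.
  have e2 : c1 / c2 + u ^+ i = u ^+ i - y by rewrite opprK addrC.
  rewrite /B pballE ratioE ?expu_neq_y // e1 e2.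
  by set A := v (u ^+ i - y); rewrite (_ : v y + vd - 2 * A + k = rad i) //; ring.
split=> [x|i j il jl ij x [/BE [_ xi] /BE [_ xj]]].
  2: exact: far_balls_disjoint il jl ij (conj xi xj).
split=> [Kx|[i il /BE [xQ xi]]]; last exact: far_ball_sub_kepler xi.
have [i il xi] := kepler_sub_far_balls Kx; exists i => //; apply/BE.
by case/kepler_setE: Kx.
Qed.

End YNotInLam.

Lemma class_near_of_order1 n : Lam y -> l = 1%N -> pdvd k (u ^+ n - y).
Proof.
move=> /Lam_y_class [i il iy] l1; move: il iy; rewrite l1 ltnS leqn0 => /eqP -> iy.
by have := pdvd_class_y n iy; rewrite l1 add0n mul1n.
Qed.

Lemma val_lam2B1_order1 : l = 1%N -> vd = v lam1 + k.
Proof.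
move=> l1; have u1 : u - 1 != 0 by rewrite subr_eq0 -(expr1 u) -l1 expu_l_neq1.
have -> : lam2 - lam1 = lam1 * (u - 1) by field.
by rewrite valM // k_def l1 expr1.
Qed.

Lemma kepler_set_order1 : Lam y -> l = 1%N -> forall x,
  kepler_set v Qp a x <-> (x \in Qp /\ ~ pball v Qp ((lam1 + lam2) / 2) (1 + v lam2) x).
Proof.
move=> yL l1 x; have vdE := val_lam2B1_order1 l1.
have [i il iy] := Lam_y_class yL.
split=> [/kepler_setE [xQ xcl]|[xQ /pballE xball]].
  split=> // /pballE [_ xal]; have [n [uy close]] := xcl (1 + v lam2).
  have ny := class_near_of_order1 n yL l1.
  have [uy0 vuy] := val_addy (val_y iy) ny.
  have [Fal0 vFal] := val_F_subal uy uy0 vuy.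
  have : pdvd (1 + v lam2) (F (u ^+ n) - al).
    by rewrite -(subrK x (F _)) -addrA pdvdD.
  move/val_pdvd/(_ Fal0); rewrite vFal vdE -val_lam12.
  have : k <= v (u ^+ n - y) by apply: val_pdvd ny _; rewrite subr_eq0.
  by set A := v (u ^+ n - y); clear; lia.
have xal : x != al by apply/negP => /eqP xal; apply: xball; rewrite xal subrr pdvd0 -xal.
apply: (far_sub_kepler iy xQ xal).
have : ~ (1 + v lam2 <= v (x - al)) by move=> ?; apply: xball; rewrite pdvd_val.
by rewrite vdE val_lam12; clear; lia.
Qed.

Section OrderGe2.
Variable s0 : nat.
Hypotheses (l_ge2 : (2 <= l)%N) (s0_lt_l : (s0 < l)%N) (s0_near : pdvd k (u ^+ s0 - y)).

Lemma val_lam2B1_order_ge2 : vd = v lam1.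
Proof.
have [u1 vu1] := val_expuB1_lt_order (isT : (0 < 1)%N) l_ge2; rewrite expr1 in u1 vu1.
have -> : lam2 - lam1 = lam1 * (u - 1) by field.
by rewrite valM // vu1 addr0.
Qed.

Lemma class_far_of_ne i : (i < l)%N -> i <> s0 ->
  forall m, u ^+ (i + l * m) != y /\ v (u ^+ (i + l * m) - y) = 0.
Proof.
move=> il is0 m; have [us0 vus0] := val_expuB_lt_order il s0_lt_l is0.
have small : pdvd (v (u ^+ i - u ^+ s0) + 1) ((u ^+ (i + l * m) - u ^+ i) + (u ^+ s0 - y)).
  by rewrite vus0 add0r; apply: (pdvdW k_ge1); rewrite pdvdD ?pdvd_expu_class.
have e : u ^+ i - u ^+ s0 + ((u ^+ (i + l * m) - u ^+ i) + (u ^+ s0 - y)) = u ^+ (i + l * m) - y.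
  by ring.
by have [] := valD_dominant us0 small; rewrite e vus0 subr_eq0.
Qed.

Lemma pdvd_al : pdvd (v lam1) al.
Proof.
have [t0 t1] := two_unit; rewrite -[v lam1]addr0; apply: pdvdM.
  by apply: pdvdD; apply: pdvd_val; rewrite ?val_lam12.
by rewrite pdvd_val // valV // t1 oppr0.
Qed.

(* On the class of [s0], [F] is dominated by its pole: [v (F x) = v (F x - al) < v al]. *)
Lemma val_F_near n : pdvd k (u ^+ n - y) -> u ^+ n != y ->
  F (u ^+ n) != 0 /\ v (F (u ^+ n)) <= v lam1 - k.
Proof.
move=> ny uy; have [uy0 vuy] := val_addy (val_y s0_near) ny.
have [Fal0 vFal] := val_F_subal uy uy0 vuy.
have kuy : k <= v (u ^+ n - y) by apply: val_pdvd ny _; rewrite subr_eq0.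
have small : pdvd (v (F (u ^+ n) - al) + 1) al.
  apply: pdvdW pdvd_al; rewrite vFal val_lam2B1_order_ge2; move: kuy k_ge1.
  by set A := v (u ^+ n - y); clear; lia.
have [+ +] := valD_dominant Fal0 small; rewrite subrK => F0 ->; split=> //.
by rewrite vFal val_lam2B1_order_ge2; move: kuy; set A := v (u ^+ n - y); clear; lia.
Qed.

Lemma pdvd_F_far i : (i < l)%N -> i <> s0 -> pdvd (v lam1) (F (u ^+ i)).
Proof.
move=> il is0; have [uy vuy] := class_far_of_ne il is0 0; rewrite muln0 addn0 in uy vuy.
have uy0 : u ^+ i - y != 0 by rewrite subr_eq0.
rewrite -mulrA -[v lam1]addr0 pdvdMl // -(addr0 0); apply: pdvdM.
  by rewrite -exprS; apply: pdvdB (pdvd_expu _) _; rewrite pdvd_val // (val_y s0_near).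
by rewrite pdvd_val // valV // vuy oppr0.
Qed.

Lemma kepler_sub_order_ge2 x : kepler_set v Qp a x ->
  (exists2 i, (i < l)%N /\ i <> s0 & pdvd (vd + k) (x - F (u ^+ i))) \/
  (x != 0 /\ v x <= v lam2 - k).
Proof.
case/kepler_setE => xQ /(_ (vd + k)) [n [uy close]]; set i := (n %% l)%N.
have il : (i < l)%N by rewrite ltn_pmod ?l_gt0.
have [is0|is0] := eqVneq i s0.
  right; have ny : pdvd k (u ^+ n - y).
    by rewrite -(subrK (u ^+ i) (u ^+ n)) -addrA pdvdD ?pdvd_expu_mod // is0.
  have [F0 vF] := val_F_near ny uy.
  have small : pdvd (v (F (u ^+ n)) + 1) (- (F (u ^+ n) - x)).
    rewrite pdvdN; apply: pdvdW close; move: vF k_ge1; rewrite val_lam2B1_order_ge2.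
    by set w := v (F (u ^+ n)); clear; lia.
  have e : F (u ^+ n) + - (F (u ^+ n) - x) = x by ring.
  by have [] := valD_dominant F0 small; rewrite e -val_lam12 => -> ->.
left; exists i; first by split=> //; apply/eqP.
have [un vun] := class_far_of_ne il (elimN eqP is0) (n %/ l).
have [ui vui] := class_far_of_ne il (elimN eqP is0) 0.
have en : (i + l * (n %/ l))%N = n by rewrite addnC mulnC -divn_eq.
rewrite en in un vun; rewrite muln0 addn0 in ui vui.
have Fni : pdvd (vd + k) (F (u ^+ n) - F (u ^+ i)).
  move: (pdvd_FB k un ui); rewrite vun vui (val_y s0_near) subr0 addr0 => ->.
  exact: pdvd_expu_mod.
have -> : x - F (u ^+ i) = - (F (u ^+ n) - x) + (F (u ^+ n) - F (u ^+ i)) by ring.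
by apply: pdvdD Fni; rewrite pdvdN.
Qed.

Lemma near_ball_sub_kepler i x : (i < l)%N -> i <> s0 -> x \in Qp ->
  pdvd (vd + k) (x - F (u ^+ i)) -> kepler_set v Qp a x.
Proof.
move=> il is0 xQ xi; apply: (ball_sub_kepler (class_far_of_ne il is0) xQ).
by rewrite (val_y s0_near) addr0 subr0.
Qed.

Lemma outside_sub_kepler x : x \in Qp -> x != 0 -> v x <= v lam2 - k -> kepler_set v Qp a x.
Proof.
move=> xQ x0 vx; have small : pdvd (v x + 1) (- al).
  rewrite pdvdN; apply: pdvdW pdvd_al; move: vx k_ge1; rewrite val_lam12; clear; lia.
have [xal0 vxal] := valD_dominant x0 small.
apply: (far_sub_kepler s0_near xQ); first by rewrite -subr_eq0.
by rewrite vxal val_lam2B1_order_ge2 val_lam12.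
Qed.

Lemma near_balls_disjoint i j x : (i < l)%N -> (j < l)%N -> i <> s0 -> j <> s0 -> i <> j ->
  ~ (pdvd (vd + k) (x - F (u ^+ i)) /\ pdvd (vd + k) (x - F (u ^+ j))).
Proof.
move=> il jl is0 js0 ij [xi xj]; have [uij0 vuij] := val_expuB_lt_order il jl ij.
have [ui vui] := class_far_of_ne il is0 0; have [uj vuj] := class_far_of_ne jl js0 0.
rewrite !muln0 !addn0 in ui vui uj vuj.
have sep : ~~ pdvd 1 (u ^+ i - u ^+ j) by rewrite /pdvd negb_or uij0 vuij.
rewrite -(pdvd_FB _ ui uj) vui vuj (val_y s0_near) in sep; case/negP: sep.
have kk : vd + 0 - (0 + 0) + 1 <= vd + k by move: k_ge1; clear; lia.
by apply: pdvd_centers; [apply: pdvdW kk xi | apply: pdvdW kk xj].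
Qed.

Lemma near_ball_inside i x : (i < l)%N -> i <> s0 -> pdvd (vd + k) (x - F (u ^+ i)) ->
  pdvd (v lam2 + 1 - k) x.
Proof.
move=> il is0 xi; rewrite -(subrK (F (u ^+ i)) x); apply: pdvdW (_ : _ <= v lam1) _.
  by rewrite val_lam12; move: k_ge1; clear; lia.
apply: pdvdD (pdvd_F_far il is0); apply: pdvdW xi; rewrite val_lam2B1_order_ge2.
by move: k_ge1; clear; lia.
Qed.

Lemma kepler_set_order_ge2 :
  let B := fun i : nat => pball v Qp (a i.+1 / a i) (v (lam2 - lam1) + k) in
  let C := fun x => x \in Qp /\ ~ pball v Qp 0 (v lam2 + 1 - k) x in
  (forall x, kepler_set v Qp a x <-> ((exists2 i : nat, (i < l)%N /\ i <> s0 & B i x) \/ C x)) /\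
  (forall i j : nat, (i < l)%N -> (j < l)%N -> i <> s0 -> j <> s0 -> i <> j ->
     forall x, ~ (B i x /\ B j x)) /\
  (forall i : nat, (i < l)%N -> i <> s0 -> forall x, ~ (B i x /\ C x)).
Proof.
move=> B C.
have BE i x : (i < l)%N -> i <> s0 -> B i x <-> x \in Qp /\ pdvd (vd + k) (x - F (u ^+ i)).
  move=> il is0; have [ui _] := class_far_of_ne il is0 0.
  by rewrite muln0 addn0 in ui; rewrite /B pballE ratioE.
have CE x : C x <-> x \in Qp /\ x != 0 /\ v x <= v lam2 - k.
  split=> -[xQ xC]; split=> //.
    have : ~ pdvd (v lam2 + 1 - k) x by move=> h; apply: xC; apply/pballE; rewrite subr0.
    rewrite /pdvd; case: eqVneq => //= x0 /negP h; split=> //.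
    by move: h; set w := v x; clear; lia.
  case: xC => x0 vx /pballE [_]; rewrite subr0 /pdvd (negbTE x0) /=.
  by move: vx; set w := v x; clear; lia.
split; [|split].
- move=> x; split=> [Kx|[[i [il is0] /(BE i x il is0) [xQ xi]]|/CE [xQ [x0 vx]]]].
  + have xQ : x \in Qp by case: Kx.
    case: (kepler_sub_order_ge2 Kx) => [[i [il is0] xi]|[x0 vx]].
      by left; exists i => //; apply/BE.
    by right; apply/CE.
  + exact: near_ball_sub_kepler xi.
  + exact: outside_sub_kepler.
- move=> i j il jl is0 js0 ij x [/(BE i x il is0) [_ xi] /(BE j x jl js0) [_ xj]].
  exact: near_balls_disjoint il jl is0 js0 ij (conj xi xj).
- move=> i il is0 x [/(BE i x il is0) [xQ xi] [_ xC]]; apply: xC; apply/pballE.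
  by rewrite subr0 (near_ball_inside il is0 xi).
Qed.

End OrderGe2.

End RecurrenceSequence.
End Valuation.

Unset Implicit Arguments.

Theorem theorem2 (p : nat) (L : fieldType) (v : L -> int) (Qp : {pred L})
  (a : nat -> L) (r s c1 c2 lam1 lam2 : L) (l : nat) (k : int) :
  prime p -> (2 < p)%N ->
  is_Qp_in p v Qp -> Qp_or_unramified_quadratic v Qp ->
  (forall n, a n \in Qp) -> r \in Qp -> s \in Qp ->
  (forall n : nat, a n.+2 = r * a n.+1 + s * a n) ->
  (forall n : nat, a n = c1 * lam1 ^+ n + c2 * lam2 ^+ n) ->
  c1 != 0 -> c2 != 0 -> lam1 != 0 -> lam2 != 0 ->
  v lam1 = v lam2 ->
  (forall n : nat, (0 < n)%N -> (lam2 / lam1) ^+ n != 1) ->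
  order_modp v (lam2 / lam1) l ->
  k = v ((lam2 / lam1) ^+ l - 1) ->
  let K := kepler_set v Qp a in
  let Lam := vclosure v (fun _ => True) (fun y => exists n : nat, y = (lam2 / lam1) ^+ n) in
  (* 1. *)
  (~ Lam (- (c1 / c2)) ->
     let B := fun i : nat => pball v Qp (a i.+1 / a i)
        (v (c1 / c2) + v (lam2 - lam1) - 2 * v (c1 / c2 + (lam2 / lam1) ^+ i) + k) in
     (forall x, K x <-> exists2 i : nat, (i < l)%N & B i x) /\
     (forall i j : nat, (i < l)%N -> (j < l)%N -> i <> j -> forall x, ~ (B i x /\ B j x)))
  /\
  (* 2. *)
  (Lam (- (c1 / c2)) -> l = 1%N ->
     forall x, K x <-> (x \in Qp /\ ~ pball v Qp ((lam1 + lam2) / 2) (1 + v lam2) x))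
  /\
  (* 3. *)
  (Lam (- (c1 / c2)) -> (2 <= l)%N ->
     forall s0 : nat, (s0 < l)%N -> vclose v k ((lam2 / lam1) ^+ s0) (- (c1 / c2)) ->
     let B := fun i : nat => pball v Qp (a i.+1 / a i) (v (lam2 - lam1) + k) in
     let C := fun x => x \in Qp /\ ~ pball v Qp 0 (v lam2 + 1 - k) x in
     (forall x, K x <-> ((exists2 i : nat, (i < l)%N /\ i <> s0 & B i x) \/ C x)) /\
     (forall i j : nat, (i < l)%N -> (j < l)%N -> i <> s0 -> j <> s0 -> i <> j ->
        forall x, ~ (B i x /\ B j x)) /\
     (forall i : nat, (i < l)%N -> i <> s0 -> forall x, ~ (B i x /\ C x))).
Proof.
move=> p_prime p_gt2 [[valM valD valp] Qp_subfield char0 Qp_residue _] _ a_Qp r_Qp _ a_rec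
  a_closed_form c1_neq0 c2_neq0 lam1_neq0 lam2_neq0 val_lam12 u_not_root1 u_order k_def K Lam.
split; [|split].
- by move=> y_notin_Lam; eapply kepler_set_y_notin_Lam; eassumption.
- by move=> y_in_Lam; eapply kepler_set_order1; eassumption.
- move=> _ l_ge2 s0 s0_lt_l /vcloseE s0_near.
  by eapply kepler_set_order_ge2; eassumption.
Qed.
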